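(* Let $f:\{0,1\}^n\to\{0,1\}^m$ be a fully balanced function and $r=\dim\operatorname{img}(f)$. Consider the procedure: set $C=B=\varnothing$. While $\langle C\cup B\rangle\neq\{0,1\}^m$: choose $\mathbf{y}\in\{0,1\}^m\setminus\langle C\cup B\rangle$ and query $\mathbf{y}$. If $\mathbf{y}\in C(f)$, add $\mathbf{y}$ to $C$. Otherwise, if $B=\varnothing$, add $\mathbf{y}$ to $B$; if $B\neq\varnothing$, go through the elements $\mathbf{s}\in B$ one at a time, querying $\mathbf{y}_{\mathbf{s}}=\mathbf{s}\oplus\mathbf{y}$: at the first $\mathbf{s}$ with $\mathbf{y}_{\mathbf{s}}\in C(f)$, add $\mathbf{y}_{\mathbf{s}}$ to $C$ and stop going through $B$; if $\mathbf{y}_{\mathbf{s}}\notin C(f)$ for all $\mathbf{s}\in B$, add $\mathbf{y}$ and all the $\mathbf{y}_{\mathbf{s}}$ ($\mathbf{s}\in B$) to $B$. Then the procedure terminates, at termination $\#C=m-r$ (so $r$ is determined with certainty, and $C$ is a basis of $C(f)$) and $\#B=2^r-1$, and the total number of oracle queries is at most $2^r(m-r+1)-1$.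
   Context: Strings in $\{0,1\}^k$ are identified with vectors of $\mathbb{F}_2^k$; $\oplus$ is bitwise addition mod 2; $\mathbf{a}\cdot\mathbf{b}=\bigoplus_i a_ib_i$; $\langle X\rangle$ is the linear span of $X$. $f$ is $\mathbf{y}$-balanced if $f(\mathbf{x})\cdot\mathbf{y}=0$ for exactly half of the $\mathbf{x}$ and $=1$ for the other half, and $\mathbf{y}$-constant if $f(\mathbf{x})\cdot\mathbf{y}$ is the same for all $\mathbf{x}$. $f$ is fully balanced if for every $\mathbf{y}$ it is $\mathbf{y}$-balanced or $\mathbf{y}$-constant; then $\operatorname{img}(f)$ is an affine subspace. $C(f)=\{\mathbf{y}: f\text{ is }\mathbf{y}\text{-constant}\}$. A query on $\mathbf{y}$ reports whether $\mathbf{y}\in C(f)$ (one run of the Generalised Phase Kick-Back algorithm with marker $\mathbf{y}$, whose output is $\mathbf{0}$ exactly when $f$ is $\mathbf{y}$-constant, for fully balanced $f$). *)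

From HB Require Import structures.
From mathcomp Require Import all_boot all_order all_algebra.
Set Implicit Arguments. Unset Strict Implicit. Unset Printing Implicit Defensive.
Import GRing.Theory.
Local Open Scope ring_scope.

Notation bits k := 'rV['F_2]_k.

Definition dotb (k : nat) (a b : bits k) : 'F_2 := (a *m b^T) 0 0.

Section Defs.
Variables (n m : nat) (f : bits n -> bits m).

Definition ybalanced (y : bits m) : Prop :=
  #|[set x | dotb (f x) y == 0]| = #|[set x | dotb (f x) y == 1]|.

Definition yconstant (y : bits m) : Prop :=
  forall x x', dotb (f x) y = dotb (f x') y.

Definition fully_balanced : Prop :=
  forall y, ybalanced y \/ yconstant y.

(* dim img(f): dimension of the direction space of the affine subspace img f *)
Definition dim_img : nat := \dim <<[seq f x - f 0 | x : bits n]>>%VS.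

(* state of the procedure: (C, B, number of oracle queries so far) *)
Definition state := (seq (bits m) * seq (bits m) * nat)%type.

Definition init_state : state := ([::], [::], 0%N).

(* one iteration of the while loop; nondeterministic in the choice of y and
   in the order in which the elements of B are gone through *)
Definition step (s s' : state) : Prop :=
  let: (C, B, q) := s in
  let: (C', B', q') := s' in
  <<C ++ B>>%VS != fullv /\
  exists y : bits m, y \notin <<C ++ B>>%VS /\
    ( (yconstant y /\ C' = rcons C y /\ B' = B /\ q' = q.+1)
    \/ (~ yconstant y /\ B = [::] /\ C' = C /\ B' = [:: y] /\ q' = q.+1)
    \/ (~ yconstant y /\ B != [::] /\
        exists ord : seq (bits m), perm_eq ord B /\
        ( (exists k : nat, (k < size ord)%N /\
             (forall i, (i < k)%N -> ~ yconstant (nth 0 ord i + y)) /\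
             yconstant (nth 0 ord k + y) /\
             C' = rcons C (nth 0 ord k + y) /\ B' = B /\ q' = (q + 1 + k.+1)%N)
        \/ ((forall i, (i < size ord)%N -> ~ yconstant (nth 0 ord i + y)) /\
             C' = C /\ B' = B ++ y :: [seq s + y | s <- ord] /\
             q' = (q + 1 + size ord)%N)))).

Inductive reachable : state -> Prop :=
| reach_init : reachable init_state
| reach_step s s' : reachable s -> step s s' -> reachable s'.

Definition final (s : state) : Prop := <<s.1.1 ++ s.1.2>>%VS = fullv.

End Defs.

From HB Require Import structures.
From mathcomp Require Import all_boot all_order all_algebra finfield zify.
From Stdlib Require Import Wf_nat.
Import GRing.Theory.
Local Open Scope ring_scope.
Set Implicit Arguments. Unset Strict Implicit. Unset Printing Implicit Defensive.

(* Let K = C(f), the orthogonal complement of the direction space of img f, of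
   dimension m - r, and W = <<B>>. The loop keeps C an independent family in K,
   keeps 0 :: B a repetition-free list of the elements of W, with W meeting K
   only in 0, and keeps q + 1 <= (#C + 1) (#B + 1). Each iteration adds a vector
   outside <<C ++ B>>, so the loop stops, and then <<C>> + W is the whole space:
   m <= #C + dim W <= (m - r) + r forces #C = m - r and dim W = r, hence
   #B = 2^r - 1, and W \cap K = 0 gives <<C>> = K. *)

Section SeqMatrix.
Variables (F : fieldType) (k : nat).
Implicit Types (X : seq 'rV[F]_k) (u : 'rV[F]_k).

Definition seqmx X : 'M[F]_(size X, k) := \matrix_(i < size X) X`_i.

Lemma mulmx_seqmx X (w : 'rV_(size X)) : w *m seqmx X = \sum_i w 0 i *: X`_i.
Proof. by rewrite mulmx_sum_row; apply: eq_bigr => i _; rewrite rowK. Qed.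

Lemma memv_span_submx X u : (u \in <<X>>%VS) = (u <= seqmx X)%MS.
Proof.
apply/idP/idP => [uX | /submxP [w ->]].
  suff -> : u = (\row_i coord (in_tuple X) i u) *m seqmx X by rewrite submxMl.
  rewrite mulmx_seqmx {1}(coord_span (X := in_tuple X) uX).
  by apply: eq_bigr => i _; rewrite mxE.
rewrite mulmx_seqmx; apply: memv_suml => i _; apply/memvZ/memv_span.
exact: mem_nth.
Qed.

Lemma rank_seqmx_free X : free X -> \rank (seqmx X) = size X.
Proof.
rewrite -[X in free X]/(val (in_tuple X)) => /freeP freeX.
apply/eqP; apply: inj_row_free => w; rewrite mulmx_seqmx => /freeX w0.
by apply/rowP => i; rewrite w0 mxE.
Qed.

Lemma dim_span_rank X : \dim <<X>> = \rank (seqmx X).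
Proof.
have sameX : (seqmx X == seqmx (vbasis <<X>>))%MS.
  apply/andP; split; apply/row_subP => i; rewrite rowK -memv_span_submx.
    by rewrite (span_basis (vbasisP _)) memv_span ?mem_nth.
  by rewrite vbasis_mem ?mem_nth.
by rewrite (eqmxP sameX) rank_seqmx_free ?size_tuple // (basis_free (vbasisP _)).
Qed.

End SeqMatrix.

Lemma dotbBl k (a b y : bits k) : dotb (a - b) y = dotb a y - dotb b y.
Proof. by rewrite /dotb mulmxBl [LHS]mxE [X in _ + X]mxE. Qed.

Lemma sub_kermx_trP k p (M : 'M['F_2]_(p, k)) (y : bits k) :
  reflect (forall i, dotb (row i M) y = 0) (y <= kermx M^T)%MS.
Proof.
have dotbE i : dotb (row i M) y = (y *m M^T) 0 i.
  by rewrite /dotb -row_mul [LHS]mxE -[y in RHS]trmxK -trmx_mul [RHS]mxE.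
apply: (iffP sub_kermxP) => [yM i | yM]; first by rewrite dotbE yM mxE.
by apply/rowP => i; rewrite -dotbE yM mxE.
Qed.

Section Markers.
Variables (n m : nat) (f : bits n -> bits m).

Definition dirs := [seq f x - f 0 | x : bits n].

Definition markermx := kermx (seqmx dirs)^T.

Lemma rank_markermx : \rank markermx = (m - dim_img f)%N.
Proof. by rewrite mxrank_ker mxrank_tr -dim_span_rank. Qed.

Lemma yconstantE y : yconstant f y <-> (y <= markermx)%MS.
Proof.
split=> [yc | /sub_kermx_trP yK x x'].
  apply/sub_kermx_trP => i; rewrite rowK.
  have /mapP [x _ ->] : dirs`_i \in dirs by apply: mem_nth.
  by rewrite dotbBl (yc x 0) subrr.
suff dotb_f0 z : dotb (f z) y = dotb (f 0) y by rewrite !dotb_f0.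
have zdirs : (index (f z - f 0)%R dirs < size dirs)%N.
  by rewrite index_mem; apply/mapP; exists z; rewrite ?mem_enum.
apply/eqP; rewrite -subr_eq0 -dotbBl.
by have := yK (Ordinal zdirs); rewrite rowK nth_index -?index_mem // => ->.
Qed.

End Markers.

Lemma F2_eq01 (a : 'F_2) : a = 0 \/ a = 1.
Proof. by case: a => [[|[|k]] ak]; [left | right |]; try exact: val_inj. Qed.

Lemma dim_bits m : \dim (fullv : {vspace bits m}) = m.
Proof. by rewrite dimvf dim_matrix mul1r. Qed.

Lemma span_ltn_dim (K : fieldType) (vT : vectType K) (X Y : seq vT) z :
  {subset X <= Y} -> z \in Y -> z \notin <<X>>%VS -> (\dim <<X>> < \dim <<Y>>)%N.
Proof.
move=> sXY zY zX; have sXYv : (<<X>> <= <<Y>>)%VS.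
  by apply/span_subvP => x /sXY /memv_span.
rewrite ltn_neqAle dimvS // andbT; apply: contraNneq zX => eqdim.
have /eqP -> : <<X>>%VS == <<Y>>%VS by rewrite eqEdim sXYv eqdim leqnn.
exact: memv_span.
Qed.

Section Procedure.
Variables (n m : nat) (f : bits n -> bits m).
Implicit Types (C B : seq (bits m)) (y : bits m).

(* As 0 :: B lists W, (size B).+1 = 2 ^ \dim W: the query bound is
   q < (#C + 1) 2 ^ \dim W, and doubling W doubles the allowance. *)
Record alg_inv C B (q : nat) : Prop := AlgInv {
  inv_free : free C;
  inv_const : {in C, forall c, yconstant f c};
  inv_uniq : uniq (0 :: B);
  inv_nonconst : {in B, forall s, ~ yconstant f s};
  inv_span : {subset <<B>>%VS <= 0 :: B};
  inv_queries : (q.+1 <= (size C).+1 * (size B).+1)%N }.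

Lemma alg_inv_init : alg_inv [::] [::] 0.
Proof.
split => //; first exact: nil_free.
by move=> u; rewrite span_nil memv0 mem_seq1.
Qed.

Lemma alg_inv_rcons C B q q' c :
  alg_inv C B q -> c \notin <<C>>%VS -> yconstant f c ->
  (q' <= q + (size B).+1)%N -> alg_inv (rcons C c) B q'.
Proof.
case=> freeC constC uniqB nonconstB spanB queries cC cc q'q; split => //.
- by rewrite (perm_free (_ : perm_eq _ (c :: C))) ?perm_rcons // free_cons cC.
- by move=> z; rewrite mem_rcons inE => /predU1P [-> | /constC].
- by rewrite size_rcons; nia.
Qed.

Lemma alg_inv_extend C B q y ord :
  alg_inv C B q -> y \notin <<B>>%VS -> ~ yconstant f y -> perm_eq ord B ->
  {in ord, forall s, ~ yconstant f (s + y)} ->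
  alg_inv C (B ++ y :: [seq s + y | s <- ord]) (q + 1 + size ord).
Proof.
case=> freeC constC uniqB nonconstB spanB queries yB cy ordB ncsy.
have -> : y :: [seq s + y | s <- ord] = [seq s + y | s <- 0 :: ord] by rewrite /= add0r.
have memW : 0 :: ord =i 0 :: B by move=> s; rewrite !inE (perm_mem ordB).
have W_span s : s \in 0 :: B -> s \in <<B>>%VS.
  by rewrite inE => /predU1P [-> | /memv_span]; rewrite ?mem0v.
split => //.
- rewrite -cat_cons cat_uniq uniqB map_inj_uniq; last exact: addIr.
  rewrite (perm_uniq (_ : perm_eq (0 :: ord) (0 :: B))) ?perm_cons // uniqB andbT.
  apply/hasPn => _ /mapP [s sW ->]; apply: contra yB => syB.
  have -> : y = (s + y) - s by rewrite addrC addKr.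
  by rewrite rpredB ?W_span // -memW.
- move=> z; rewrite mem_cat => /orP [/nonconstB // | /mapP [s]].
  by rewrite inE => /predU1P [-> -> | sord ->]; [rewrite add0r | exact: ncsy].
- move=> u uB'.
  have sub : (<<B ++ [seq (s + y)%R | s <- 0%R :: ord]>> <= <<B>> + <[y]>)%VS.
    apply/span_subvP => z; rewrite mem_cat => /orP [/memv_span zB | /mapP [s sW ->]].
      exact: (subvP (addvSl _ _)).
    by apply: memv_add; [apply: W_span; rewrite -memW | apply: memv_line].
  case/memv_addP: (subvP sub _ uB') => v vB [w /vlineP [a ->] ->].
  have vW : v \in 0 :: B by apply: spanB.
  rewrite -cat_cons mem_cat; case: (F2_eq01 a) => ->; first by rewrite scale0r addr0 vW.
  by rewrite scale1r; apply/orP; right; apply/mapP; exists v; rewrite ?memW.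
- by rewrite size_cat size_map /= (perm_size ordB); nia.
Qed.

Lemma step_cases C B q C' B' q' : step f (C, B, q) (C', B', q') ->
  (exists c, [/\ c \notin <<C ++ B>>%VS, yconstant f c, C' = rcons C c, B' = B
                & (q' <= q + (size B).+1)%N])
  \/ (exists y ord, [/\ y \notin <<C ++ B>>%VS, ~ yconstant f y, perm_eq ord B,
        {in ord, forall s, ~ yconstant f (s + y)}
      & [/\ C' = C, B' = B ++ y :: [seq s + y | s <- ord] & q' = (q + 1 + size ord)%N]]).
Proof.
(* The first element put into B is the extension of B = [::] with ord = [::]. *)
case=> _ [y [yCB [[cy [-> [-> ->]]] | [[cy [B0 [-> [-> ->]]]] | [cy [_ [ord [ordB]]]]]]]].
- by left; exists y; split; rewrite // addnS ltnS leq_addr.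
- by subst B; right; exists y, [::]; split; rewrite // addn0 addn1.
case=> [[k [kord [_ [csy [-> [-> ->]]]]]] | [csy [-> [-> ->]]]].
  left; exists (nth 0 ord k + y); split => //.
    rewrite rpredDl //; apply/memv_span.
    by rewrite mem_cat -(perm_mem ordB) mem_nth ?orbT.
  by rewrite -(perm_size ordB) -addnA add1n leq_add2l ltnS.
right; exists y, ord; split => // s sord.
by have := csy (index s ord); rewrite index_mem nth_index //; apply.
Qed.

Lemma alg_inv_step C B q C' B' q' :
  alg_inv C B q -> step f (C, B, q) (C', B', q') -> alg_inv C' B' q'.
Proof.
move=> inv /step_cases [[c [cCB cc -> -> qq]] | [y [ord [yCB cy ordB csy [-> -> ->]]]]].
  apply: (alg_inv_rcons inv) => //; apply: contra cCB; apply/subvP.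
  by rewrite span_cat addvSl.
apply: (alg_inv_extend inv) => //; apply: contra yCB; apply/subvP.
by rewrite span_cat addvSr.
Qed.

Lemma reachable_inv (s : state m) : reachable f s -> alg_inv s.1.1 s.1.2 s.2.
Proof.
elim=> [|[[C B] q] [[C' B'] q'] _ inv st]; first exact: alg_inv_init.
exact: alg_inv_step inv st.
Qed.

Lemma step_dim_ltn C B q C' B' q' : step f (C, B, q) (C', B', q') ->
  (\dim <<C ++ B>> < \dim <<C' ++ B'>>)%N.
Proof.
case/step_cases => [[c [cCB _ -> -> _]] | [y [ord [yCB _ _ _ [-> -> _]]]]].
  apply: (span_ltn_dim (z := c)) => //; last by rewrite mem_cat mem_rcons mem_head.
  by move=> z; rewrite !mem_cat mem_rcons inE => /orP [] ->; rewrite ?orbT.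
apply: (span_ltn_dim (z := y)) => //; last by rewrite !mem_cat mem_head !orbT.
by move=> z zCB; rewrite catA mem_cat zCB.
Qed.

Lemma step_Acc (s : state m) : Acc (fun s' s => step f s s') s.
Proof.
pose measure (s : state m) := (m - \dim <<s.1.1 ++ s.1.2>>)%N.
apply: (well_founded_lt_compat _ measure) => [[[C' B'] q']] [[C B] q] st.
have lt_dim := step_dim_ltn st.
have le_dim : (\dim <<C' ++ B'>> <= m)%N.
  by have := dimvS (subvf <<C' ++ B'>>%VS); rewrite dim_bits.
by apply/ltP; rewrite /measure /=; lia.
Qed.

Lemma step_exists C B q : <<C ++ B>>%VS != fullv -> exists s', step f (C, B, q) s'.
Proof.
move=> notfull.
have [y _ yCB] : exists2 y, y \in fullv & y \notin <<C ++ B>>%VS.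
  by apply/subvPn; apply: contra notfull => full; rewrite eqEsubv subvf.
case: (boolP (y <= markermx f)%MS) => [/yconstantE cy | /negP ncy].
  by exists (rcons C y, B, q.+1); split => //; exists y; split => //; left.
have {}ncy : ~ yconstant f y by move/yconstantE.
have [B0 | Bn] := eqVneq B [::].
  by subst B; exists (C, [:: y], q.+1); split => //; exists y; split => //; right; left.
pose csy (s : bits m) := ((s + y)%R <= markermx f)%MS.
case: (boolP (has csy B)) => [hasB | /hasPn hasNB].
  exists (rcons C (nth 0 B (find csy B) + y), B, (q + 1 + (find csy B).+1)%N).
  split => //; exists y; split => //; right; right; split => //; split => //.
  exists B; split => //; left; exists (find csy B); split; first by rewrite -has_find.
  split; first by move=> i ilt /yconstantE; rewrite -/(csy _) before_find.
  by split => //; apply/yconstantE; apply: (nth_find 0 hasB).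
exists (C, B ++ y :: [seq s + y | s <- B], (q + 1 + size B)%N).
split => //; exists y; split => //; right; right; split => //; split => //.
exists B; split => //; right; split => //.
by move=> i iB /yconstantE; apply/negP; apply: hasNB; apply: mem_nth.
Qed.

Lemma seqmx_sub_markermx C :
  {in C, forall c, yconstant f c} -> (seqmx C <= markermx f)%MS.
Proof.
by move=> constC; apply/row_subP => i; rewrite rowK -yconstantE; apply/constC/mem_nth.
Qed.

Lemma capmx_seqmx_markermx B :
  {in B, forall s, ~ yconstant f s} -> {subset <<B>>%VS <= 0 :: B} ->
  (seqmx B :&: markermx f = 0)%MS.
Proof.
move=> nonconstB spanB; apply/eqP/rowV0P => v; rewrite sub_capmx.
case/andP; rewrite -memv_span_submx => /spanB; rewrite inE.
by case/predU1P => [// | /nonconstB vc /yconstantE].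
Qed.

Lemma final_dims C B q : alg_inv C B q -> <<C ++ B>>%VS = fullv ->
  size C = (m - dim_img f)%N /\ \dim <<B>> = dim_img f.
Proof.
case=> /eqP dimC /seqmx_sub_markermx CK _ nonconstB spanB _ full.
have leC : (size C <= m - dim_img f)%N.
  by rewrite -dimC dim_span_rank -rank_markermx mxrankS.
have leB : (\dim <<B>> + (m - dim_img f) <= m)%N.
  rewrite dim_span_rank -rank_markermx.
  by rewrite -(mxrank_disjoint_sum (capmx_seqmx_markermx nonconstB spanB)) rank_leq_col.
have geCB : (m <= size C + \dim <<B>>)%N.
  by rewrite -dimC -{1}(dim_bits m) -full span_cat (dimv_add_leqif _ _).1.
have le_img : (dim_img f <= m)%N by rewrite /dim_img dim_span_rank rank_leq_col.
lia.
Qed.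

Lemma final_span_constant C B q : alg_inv C B q -> <<C ++ B>>%VS = fullv ->
  forall y, y \in <<C>>%VS <-> yconstant f y.
Proof.
case=> _ /seqmx_sub_markermx CK _ nonconstB spanB _ full y.
rewrite yconstantE; split => [| yK].
  by rewrite memv_span_submx => /submx_trans; apply.
have /memv_addP [c cC [w wB yE]] : y \in (<<C>> + <<B>>)%VS.
  by rewrite -span_cat full memvf.
suff w0 : w = 0 by rewrite yE w0 addr0.
apply/eqP; rewrite -submx0 -(capmx_seqmx_markermx nonconstB spanB) sub_capmx.
rewrite -memv_span_submx wB /=.
have -> : w = y - c by rewrite yE addrC addKr.
rewrite addmx_sub //; change (- (c : 'M_(1, m)) <= markermx f)%MS.
by rewrite eqmx_opp (submx_trans _ CK) // -memv_span_submx.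
Qed.

Lemma alg_inv_size_B C B q : alg_inv C B q -> size B = (2 ^ \dim <<B>> - 1)%N.
Proof.
case=> _ _ uniqB _ spanB _.
have : #|<<B>>%VS| = size (0 :: B).
  rewrite -(card_uniqP uniqB); apply: eq_card => u.
  apply/idP/idP => [/spanB // |]; rewrite inE => /predU1P [-> | /memv_span //].
  exact: mem0v.
by rewrite card_vspace card_Fp //= => ->; rewrite subn1.
Qed.

End Procedure.

Theorem mainTheorem10 (n m : nat) (f : 'rV['F_2]_n -> 'rV['F_2]_m) :
  fully_balanced f ->
  Acc (fun s' s => step f s s') (init_state m) /\
  (forall C B q, reachable f (C, B, q) -> ~ (exists s', step f (C, B, q) s') ->
     final (C, B, q) /\
     #|[set y in C]| = (m - dim_img f)%N /\
     free C /\ (forall y, y \in <<C>>%VS <-> yconstant f y) /\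
     #|[set y in B]| = (2 ^ dim_img f - 1)%N /\
     (q <= 2 ^ dim_img f * (m - dim_img f + 1) - 1)%N).
Proof.
(* Full balancedness is what makes a query report yconstant; the oracle is
   modelled by yconstant directly. *)
move=> _; split=> [|C B q reach stuck]; first exact: step_Acc.
have inv : alg_inv f C B q := reachable_inv reach.
have [full | /(step_exists _ q)/stuck //] := eqVneq <<C ++ B>>%VS fullv.
have [sizeC dimB] := final_dims inv full.
have spanC := final_span_constant inv full.
have sizeB := alg_inv_size_B inv; rewrite dimB in sizeB.
case: inv => freeC _ /andP [_ uniqB] _ _ queries.
split=> //; split; first by rewrite cardsE (card_uniqP (free_uniq freeC)).
split=> //; split=> //; split; first by rewrite cardsE (card_uniqP uniqB).
move: queries; rewrite sizeC sizeB; have := expn_gt0 2 (dim_img f).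
by set t := (2 ^ _)%N; nia.
Qed.
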